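(* For every agent $i\in[n]$ and every price $p>0$, \[ \mathbb{E}_{v_i\sim\mathcal F_i}[y^*_i(v_i,p)]\ \ge\ \frac{1-H_i(p)}{2\kappa-1},\qquad\text{where } H_i(t)=F_{i,0}(2\kappa t). \]
   Context: Agent $i$ has a valuation $v_i:[0,1]\to\mathbb{R}_{\ge0}$ drawn from a distribution $\mathcal F_i$; almost surely $v_i$ is non-decreasing, concave and differentiable on $[0,1]$ (one-sided derivatives at endpoints), with $v_i(1)>0$ and $v_i'(0)/v_i(1)\le\kappa$ for a fixed $\kappa\ge1$. $F_{i,0}$ is the cdf of $v_i'(0)$ for $v_i\sim\mathcal F_i$. For $p>0$, $y^*_i(v_i,p)\in[0,1]$ is a maximizer of $z\mapsto v_i(z)-pz$ over $[0,1]$ (fixed measurable selection).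
   Formalization: Almost surely each valuation $v_i$ also satisfies the normalization $v_i(0)=0$, a condition not among the listed properties of $v_i$. The statement above fails without it. *)

From HB Require Import structures.
From mathcomp Require Import all_boot all_order all_algebra.
From mathcomp Require Import all_classical all_reals all_analysis.
Set Implicit Arguments. Unset Strict Implicit. Unset Printing Implicit Defensive.
Import Order.TTheory GRing.Theory Num.Theory.
Import numFieldNormedType.Exports.
Local Open Scope classical_set_scope.
Local Open Scope ring_scope.

Definition rderiv0 {R : realType} (v : R -> R) : R :=
  lim ((fun h : R => h^-1 * (v h - v 0)) @ 0^'+).

Definition admissible_valuation {R : realType} (kappa : R) (v : R -> R) : Prop :=
  (forall x, 0 <= x <= 1 -> 0 <= v x) /\
  v 0 = 0 /\
  (forall x y, 0 <= x -> x <= y -> y <= 1 -> v x <= v y) /\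
  (forall x y t, 0 <= x <= 1 -> 0 <= y <= 1 -> 0 <= t <= 1 ->
      (1 - t) * v x + t * v y <= v ((1 - t) * x + t * y)) /\
  (forall x, 0 < x < 1 -> derivable v x 1) /\
  cvg ((fun h : R => h^-1 * (v h - v 0)) @ 0^'+) /\
  cvg ((fun h : R => h^-1 * (v (1 + h) - v 1)) @ 0^'-) /\
  0 < v 1 /\
  rderiv0 v / v 1 <= kappa.

Definition is_maximizer {R : realType} (v : R -> R) (p y : R) : Prop :=
  0 <= y <= 1 /\ forall z, 0 <= z <= 1 -> v z - p * z <= v y - p * y.

(** If the slope [a = v'(0)] of an admissible valuation exceeds [2 kappa p],
    concavity ([v y <= a y]) and optimality of [y] against [z = 1]
    ([v 1 - p <= v y - p y]), together with [a <= kappa v 1], force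
    [y >= 1 / (2 kappa - 1)].  Hence [y*] dominates [(2 kappa - 1)^-1] times the
    indicator of the event [{v'(0) > 2 kappa p}], whose probability is
    [1 - H p]; integrating gives the bound. *)

From HB Require Import structures.
From mathcomp Require Import all_boot all_order all_algebra.
From mathcomp Require Import all_classical all_reals all_analysis.
From mathcomp Require Import measurable_realfun ring lra.
Import Order.TTheory GRing.Theory Num.Theory.
Import numFieldNormedType.Exports.
Local Open Scope classical_set_scope.
Local Open Scope ring_scope.

Section ConcaveSlopeAtZero.
Variables (R : realType) (v : R -> R).
Hypothesis v0 : v 0 = 0.
Hypothesis v_concave : forall x y t, 0 <= x <= 1 -> 0 <= y <= 1 -> 0 <= t <= 1 ->
  (1 - t) * v x + t * v y <= v ((1 - t) * x + t * y).

Lemma concave_slope0_le (h y : R) : 0 < h -> h <= y -> y <= 1 -> v y / y <= v h / h.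
Proof.
move=> h0 hy y1; have y0 := lt_le_trans h0 hy.
have t01 : 0 <= h / y <= 1 by rewrite divr_ge0 ?(ltW h0) ?(ltW y0) //= ler_pdivrMr // mul1r.
have := v_concave 0 y (h / y).
rewrite lexx ler01 y1 (ltW y0) t01 mulr0 add0r v0 mulr0 add0r divfK ?gt_eqF // => /(_ isT isT isT).
have -> : h / y * v y = v y / y * h by ring.
by rewrite ler_pdivlMr.
Qed.

Lemma concave_slope0_le_rderiv0 (y : R) :
  cvg ((fun h : R => h^-1 * (v h - v 0)) @ 0^'+) ->
  0 < y -> y <= 1 -> v y / y <= rderiv0 v.
Proof.
move=> vcvg y0 y1; apply: limr_ge => //; near=> h.
have h0 : 0 < h by near: h; exact: nbhs_right_gt.
have hy : h < y by near: h; exact: nbhs_right_lt.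
by rewrite v0 subr0 [h^-1 * _]mulrC concave_slope0_le // ltW.
Unshelve. all: end_near.
Qed.

End ConcaveSlopeAtZero.

Lemma admissible_le_tangent0 (R : realType) (kappa : R) v y :
  admissible_valuation kappa v -> 0 <= y <= 1 -> v y <= rderiv0 v * y.
Proof.
move=> [_ [v0 [_ [vconc [_ [vcvg _]]]]]] /andP[y0 y1].
have [->|yn0] := eqVneq y 0; first by rewrite v0 mulr0.
have ypos : 0 < y by rewrite lt_def yn0 y0.
by rewrite -ler_pdivrMr // concave_slope0_le_rderiv0.
Qed.

Lemma maximizer_ge_of_steep (R : realType) (kappa : R) v p y :
  1 <= kappa -> admissible_valuation kappa v -> 0 < p -> is_maximizer v p y ->
  2 * kappa * p < rderiv0 v -> (2 * kappa - 1)^-1 <= y.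
Proof.
move=> k1 adm p0 ymax ha; have [/andP[y0 y1] yopt] := ymax.
have [_ [_ [_ [_ [_ [_ [_ [v1pos hk]]]]]]]] := adm.
set a := rderiv0 v in ha hk *.
have a0 : 0 < a by apply: lt_trans ha; rewrite !mulr_gt0 //; lra.
have vy_le : v y <= a * y by apply: admissible_le_tangent0 adm _; rewrite y0 y1.
have v1_le : v 1 <= a * y + p * (1 - y).
  have := yopt 1; rewrite lexx ler01 => /(_ isT); lra.
have a_le : a <= kappa * (a * y) + kappa * p * (1 - y).
  have a_le_v1 : a <= kappa * v 1 by rewrite -ler_pdivrMr.
  have : kappa * v 1 <= kappa * (a * y + p * (1 - y)) by rewrite ler_wpM2l //; lra.
  lra.
have slack : kappa * p * (1 - y) <= a / 2 * (1 - y).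
  by rewrite ler_wpM2r ?subr_ge0 //; lra.
have : a * 1 <= a * (kappa * y + (1 - y) / 2) by lra.
rewrite ler_pM2l // => one_le.
by rewrite -[_^-1]mul1r ler_pdivrMr; lra.
Qed.

Lemma measurable_superlevel {d : measure_display} {T : measurableType d}
  {R : realType} (g : T -> R) (t : R) :
  measurable_fun setT g -> measurable [set w | t < g w].
Proof. by move=> mg; rewrite -preimage_itvoy -[_ @^-1` _]setTI; exact: mg. Qed.

Lemma fine_probability_le_complement (d : measure_display) (T : measurableType d)
  (R : realType) (P : probability T R) (g : T -> R) (t : R) :
  measurable_fun setT g ->
  fine (P [set w | g w <= t]) = 1 - fine (P [set w | t < g w]).
Proof.
move=> mg.
have -> : [set w | g w <= t] = ~` [set w | t < g w].
  by apply/seteqP; split => w /=; rewrite leNgt => /negP.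
rewrite probability_setC ?fineB ?fin_num_measure //; exact: measurable_superlevel.
Qed.

Lemma scaled_measure_le_integral (d : measure_display) (T : measurableType d)
  (R : realType) (mu : {measure set T -> \bar R}) (A : set T) (c : R) (f : T -> R) :
  measurable A -> 0 <= c -> measurable_fun setT f ->
  {ae mu, forall w, c * \1_A w <= f w} ->
  (c%:E * mu A <= \int[mu]_w (f w)%:E)%E.
Proof.
move=> mA c0 mf cAf.
have mfE : measurable_fun setT (fun w => (f w)%:E).
  exact/measurable_EFinP.
have mfmaxE : measurable_fun setT (fun w => (Num.max (f w) 0)%:E).
  apply/measurable_EFinP.
  exact: measurable_maxr mf (measurable_cst (0 : R)).
have mAE : measurable_fun setT (fun w => (\1_A w : R)%:E).
  by apply/measurable_EFinP; exact: measurable_indic.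
have fge0 : {ae mu, forall w, 0 <= f w}.
  by apply: filterS cAf => w /(le_trans _); apply; rewrite mulr_ge0.
(* [ae_ge0_le_integral] needs an integrand that is nonnegative everywhere. *)
rewrite (@ae_eq_integral _ _ _ mu setT (fun w => (Num.max (f w) 0)%:E)) //; last first.
  by apply: filterS fge0 => w fw _; rewrite max_l.
rewrite -[A in mu A]setIT -integral_indic // -ge0_integralZl ?lee_fin //.
apply: ae_ge0_le_integral => //.
- by move=> w _; rewrite lee_fin mulr_ge0.
- exact/measurable_EFinP/measurable_funM.
- by move=> w _; rewrite lee_fin le_max lexx orbT.
by apply: filterS cAf => w cfw _; rewrite -EFinM lee_fin (le_trans cfw) // le_max lexx.
Qed.

Theorem mainTheorem9 (d : measure_display) (T : measurableType d) (R : realType)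
  (P : probability T R) (n : nat) (kappa : R)
  (V : 'I_n -> T -> R -> R)
  (ystar : (R -> R) -> R -> R) :
  1 <= kappa ->
  (forall i, {ae P, forall w, admissible_valuation kappa (V i w)}) ->
  (forall v p, admissible_valuation kappa v -> 0 < p -> is_maximizer v p (ystar v p)) ->
  (forall i p, 0 < p -> measurable_fun setT (fun w => ystar (V i w) p)) ->
  (forall i, measurable_fun setT (fun w => rderiv0 (V i w))) ->
  forall (i : 'I_n) (p : R), 0 < p ->
    let F0 := fun t : R => fine (P [set w | rderiv0 (V i w) <= t]) in
    let H := fun t : R => F0 (2 * kappa * t) in
    (((1 - H p) / (2 * kappa - 1))%:E <= \int[P]_w (ystar (V i w) p)%:E)%E.
Proof.
move=> k1 adm ymax ymeas rmeas i p p0 /=.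
set A := [set w | 2 * kappa * p < rderiv0 (V i w)].
have mA : measurable A := measurable_superlevel _ (2 * kappa * p) (rmeas i).
rewrite fine_probability_le_complement // opprB addrC subrK mulrC EFinM fineK ?fin_num_measure //.
apply: scaled_measure_le_integral => //.
- by rewrite invr_ge0; lra.
- exact: ymeas.
apply: filterS (adm i) => w admw.
rewrite indicE; have [wA|_] := boolP (w \in A); last first.
  by rewrite mulr0; have [/andP[]] := ymax _ _ admw p0.
by rewrite mulr1; apply: maximizer_ge_of_steep (ymax _ _ admw p0) _ => //; rewrite inE in wA.
Qed.
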